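(* For a random partition $p$ the following are equivalent: (i) $p$ generates the potential for TU games, i.e., $\sum_{\pi\in\Pi(N)}p_N(\pi)\sum_{B\in\pi}v(B)=\mathrm{Pot}(v)$ for all $N\subseteq\mathbf{U}$ and all TU games $v$ on $N$; (ii) $\sum_{\pi\in\Pi(N):T\in\pi}p_N(\pi)=\frac{(n-t)!(t-1)!}{n!}$ for all $N\subseteq\mathbf{U}$ and nonempty $T\subseteq N$; (iii) for all $N\subseteq\mathbf{U}$, $i\in N$, and nonempty $S\subseteq N\setminus\{i\}$, $$\sum_{\pi\in\Pi((N\setminus\{i\})\setminus S)}p_{N\setminus\{i\}}(\{S\}\cup\pi)=\frac{n}{n-s}\sum_{\pi\in\Pi((N\setminus\{i\})\setminus S)}\sum_{B\in\pi\cup\{\emptyset\}}p_N(\{S\}\cup\pi_{+i\leadsto B}).$$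
   Context: $\mathbf{U}$ is a finite set of players; cardinalities of $N,S,T,B$ are $n,s,t,b$. $\Pi(N)$ is the set of partitions of $N$ ($\Pi(\emptyset)=\{\emptyset\}$). A random partition is a family $p=(p_N)_{N\subseteq\mathbf{U}}$ with $p_N$ a probability distribution on $\Pi(N)$. For $\pi\in\Pi(M)$, $i\notin M$, $B\in\pi$: $\pi_{+i\leadsto B}=(\pi\setminus\{B\})\cup\{B\cup\{i\}\}$ and $\pi_{+i\leadsto\emptyset}=\pi\cup\{\{i\}\}$. A TU game on $N$ is $v:2^N\to\mathbb{R}$ with $v(\emptyset)=0$; $v_{-i}$ denotes its restriction to subsets of $N\setminus\{i\}$. $\mathrm{Pot}$ is the potential for TU games: the unique map with value $0$ on the game with empty player set and $\sum_{i\in N}[\mathrm{Pot}(v)-\mathrm{Pot}(v_{-i})]=v(N)$; explicitly $\mathrm{Pot}(v)=\sum_{\emptyset\ne S\subseteq N}\frac{(s-1)!(n-s)!}{n!}v(S)$. *)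

From mathcomp Require Import all_boot all_order all_algebra.
Set Implicit Arguments. Unset Strict Implicit. Unset Printing Implicit Defensive.
Import Order.TTheory GRing.Theory Num.Theory.
Local Open Scope ring_scope.

Section Defs.
Variables (U : finType) (R : realFieldType).

(* Pi(N): mathcomp's [partition P N] = cover P = N, trivIset P, set0 \notin P.
   In particular Pi(set0) = {set0}. *)

Definition random_partition (p : {set U} -> {set {set U}} -> R) : Prop :=
  forall N : {set U},
    [/\ forall P, 0 <= p N P,
        forall P, ~~ partition P N -> p N P = 0
      & \sum_(P : {set {set U}} | partition P N) p N P = 1].

(* A TU game on N: v : 2^U -> R with v set0 = 0; only its values on
   subsets of N are used. *)
Definition TU_game (v : {set U} -> R) : Prop := v set0 = 0.

Definition Pot (N : {set U}) (v : {set U} -> R) : R :=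
  \sum_(S : {set U} | (S \subset N) && (S != set0))
     (((#|S|.-1)`! * (#|N| - #|S|)`!)%:R / (#|N|`!)%:R) * v S.

(* pi_{+i ~> B}  (B = set0 encodes the empty block). *)
Definition add_to (P : {set {set U}}) (i : U) (B : {set U}) : {set {set U}} :=
  if B == set0 then P :|: [set [set i]]
  else (P :\ B) :|: [set B :|: [set i]].

End Defs.

(* Everything is governed by the block probabilities q(N,T), the probability
   that T is a block of the random partition of N.  The expected sum of v over
   the blocks is sum_T q(N,T) v(T) while Pot(v) = sum_T w(n,t) v(T) with the
   Shapley weight w(n,t) = (n-t)!(t-1)!/n!, so (i) is (ii) tested on
   indicator games.  Adding i to a block of a partition of N \ i, or as a new
   singleton, enumerates every partition of N exactly once; hence both sides
   of (iii) are block probabilities and (iii) reads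
   q(N\i,S) = n/(n-s) q(N,S).  The weights w satisfy this recursion, and
   conversely it determines q(N,T) for T <> N by induction on n, while q(N,N)
   is then fixed by sum_T t q(N,T) = n, the expected total size of the
   blocks. *)

From mathcomp Require Import all_boot all_order all_algebra.
From mathcomp Require Import ring.
Set Implicit Arguments. Unset Strict Implicit. Unset Printing Implicit Defensive.
Import Order.TTheory GRing.Theory Num.Theory.
Local Open Scope ring_scope.

Lemma setD1_id (T : finType) (x : T) (A : {set T}) : x \notin A -> A :\ x = A.
Proof. by move=> xA; apply/setDidPl; rewrite disjoint_sym disjoints1. Qed.

Section PartitionBlocks.
Variable T : finType.
Implicit Types (P Q : {set {set T}}) (A B D M : {set T}) (i : T).

Lemma partition_setU1 P A M : A \notin P ->
  partition (A |: P) M = [&& A != set0, A \subset M & partition P (M :\: A)].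
Proof.
move=> AP; apply/idP/and3P => [partAP | [A0 AM partP]].
  split; [exact: partition_neq0 partAP (setU11 A P)|
          exact: partitionS partAP (setU11 A P)|].
  by rewrite -(setU1K AP) partitionD1 ?setU11.
rewrite -(setID M A) (setIidPr AM); apply: partitionU1 => //.
by rewrite -setI_eq0 setIDA (setIidPl AM) setDv.
Qed.

Lemma partition_notin P D A i : partition P D -> i \notin D -> i \in A -> A \notin P.
Proof.
move=> partP iD iA; apply: contra iD => AP.
exact: subsetP (partitionS partP AP) i iA.
Qed.

(* The suffix [block0] refers to [B \in set0 |: P]: a block of [P], or the empty
   block through which [add_to] creates a singleton. *)
Lemma sub_block0 P D B : partition P D -> B \in set0 |: P -> B \subset D.
Proof. by move=> partP /setU1P[-> | BP]; [exact: sub0set | exact: partitionS BP]. Qed.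

Lemma partition_block0D1 P D B : partition P D -> B \in set0 |: P ->
  partition (P :\ B) (D :\: B).
Proof.
move=> partP /setU1P[-> | BP]; last exact: partitionD1.
by rewrite setD0 setD1_id ?(partition0 partP).
Qed.

Lemma add_toE P D i B : partition P D -> B \in set0 |: P ->
  add_to P i B = (B :|: [set i]) |: (P :\ B).
Proof.
move=> partP /setU1P[-> | BP]; rewrite /add_to.
  by rewrite eqxx set0U setUC setD1_id // (partition0 partP).
by rewrite (negbTE (partition_neq0 partP BP)) setUC.
Qed.

Lemma notin_block0 P D B i : partition P D -> i \notin D -> B \in set0 |: P ->
  i \notin B.
Proof. by move=> partP iD /(sub_block0 partP) BD; apply: contra iD; apply: subsetP. Qed.

Lemma extended_block_notin P D B i : partition P D -> i \notin D -> B \in set0 |: P ->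
  (B :|: [set i]) \notin P :\ B.
Proof.
move=> partP iD BP; apply: (partition_notin (i := i) (partition_block0D1 partP BP)).
  by rewrite inE (negbTE iD) andbF.
by rewrite !inE eqxx orbT.
Qed.

Lemma partition_add_to P D i B : partition P D -> i \notin D -> B \in set0 |: P ->
  partition (add_to P i B) (i |: D).
Proof.
move=> partP iD BP; rewrite (add_toE _ partP BP) partition_setU1; last first.
  exact: extended_block_notin partP iD BP.
apply/and3P; split.
- by apply/set0Pn; exists i; rewrite !inE eqxx orbT.
- by rewrite setUC setUS // (sub_block0 partP BP).
- have -> : (i |: D) :\: (B :|: [set i]) = D :\: B.
    apply/setP => x; rewrite !inE.
    by case: eqVneq => [-> | _]; rewrite ?orbT ?orbF ?(negbTE iD) ?andbF.
  exact: partition_block0D1 partP BP.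
Qed.

Lemma pblock_add_to P D i B : partition P D -> i \notin D -> B \in set0 |: P ->
  pblock (add_to P i B) i = B :|: [set i].
Proof.
move=> partP iD BP; apply: def_pblock.
- exact: partition_trivIset (partition_add_to partP iD BP).
- by rewrite (add_toE _ partP BP) setU11.
- by rewrite !inE eqxx orbT.
Qed.

Definition remove_from Q i : {set {set T}} :=
  if pblock Q i :\ i == set0 then Q :\ pblock Q i
  else (pblock Q i :\ i) |: (Q :\ pblock Q i).

Lemma add_toK P D i B : partition P D -> i \notin D -> B \in set0 |: P ->
  remove_from (add_to P i B) i = P.
Proof.
move=> partP iD BP; rewrite /remove_from (pblock_add_to partP iD BP) (add_toE _ partP BP).
rewrite setU1K ?(extended_block_notin partP iD BP) // [B :|: _]setUC setU1K; last first.
  exact: notin_block0 partP iD BP.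
case/setU1P: BP => [-> | BP]; first by rewrite eqxx setD1_id ?(partition0 partP).
by rewrite (negbTE (partition_neq0 partP BP)) setD1K.
Qed.

Lemma remove_fromK Q D i : partition Q (i |: D) -> i \notin D ->
  [/\ partition (remove_from Q i) D, pblock Q i :\ i \in set0 |: remove_from Q i
    & add_to (remove_from Q i) i (pblock Q i :\ i) = Q].
Proof.
move=> partQ iD; have trivQ := partition_trivIset partQ.
set A := pblock Q i; set C := A :\ i.
have AQ : A \in Q by rewrite pblock_mem // (cover_partition partQ) setU11.
have iA : i \in A by rewrite mem_pblock (cover_partition partQ) setU11.
have partQA : partition (Q :\ A) (D :\: C).
  have -> : D :\: C = (i |: D) :\: A.
    by apply/setP => x; rewrite !inE; case: eqVneq => [-> | _]; rewrite ?iA ?(negbTE iD).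
  exact: partitionD1.
rewrite /remove_from -/A -/C; case: eqP => [C0 | /eqP C0].
  have A1 : A = [set i] by rewrite -(setD1K iA) -/C C0 setU0.
  rewrite C0 setU11 /add_to eqxx -A1 setUC setD1K //.
  by move: partQA; rewrite C0 setD0.
have CQA : C \notin Q :\ A.
  apply/negP => /setD1P[CA CQ]; case/set0Pn: C0 => x xC.
  move: CA; rewrite -(def_pblock trivQ CQ xC) (def_pblock trivQ AQ) ?eqxx //.
  exact: subsetP (subD1set A i) x xC.
have partR : partition (C |: (Q :\ A)) D.
  rewrite partition_setU1 // C0 partQA andbT /=.
  apply/subsetP => x /setD1P[xi xA]; move: (subsetP (partitionS partQ AQ) x xA).
  by rewrite !inE (negbTE xi).
have CR : C \in set0 |: (C |: (Q :\ A)) by rewrite setU1r ?setU11.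
have CiA : C :|: [set i] = A by rewrite setUC setD1K.
by split=> //; rewrite (add_toE _ partR CR) setU1K // CiA setD1K.
Qed.

Section Sums.
Variables (V : nmodType) (F : {set {set T}} -> V).

Lemma sum_partitions_with_block M A : A \subset M -> A != set0 ->
  \sum_(P | partition P (M :\: A)) F (A |: P) =
  \sum_(Q | partition Q M && (A \in Q)) F Q.
Proof.
move=> AM A0; symmetry.
rewrite (reindex_onto (fun P => A |: P) (fun Q => Q :\ A)) /=; last first.
  by move=> Q /andP[_ AQ]; rewrite setD1K.
apply: eq_bigl => P; rewrite setU11 andbT.
apply/andP/idP => [[partAP /eqP AK] | partP].
  have AP : A \notin P by rewrite -AK setD11.
  by move: partAP; rewrite partition_setU1 // => /and3P[].
have AP : A \notin P.
  by case/set0Pn: A0 => x xA; apply: (partition_notin (i := x) partP); rewrite ?inE xA.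
by rewrite partition_setU1 // A0 AM partP setU1K.
Qed.

Lemma sum_partitions_setU1 D i : i \notin D ->
  \sum_(Q | partition Q (i |: D)) F Q =
  \sum_(P | partition P D) \sum_(B in set0 |: P) F (add_to P i B).
Proof.
move=> iD; rewrite pair_big_dep /=.
rewrite (reindex_onto (fun PB => add_to PB.1 i PB.2)
                      (fun Q => (remove_from Q i, pblock Q i :\ i))) /=; last first.
  by move=> Q partQ; have [_ _ ->] := remove_fromK partQ iD.
apply: eq_bigl => [[P B]] /=; apply/andP/andP => [[partQ /eqP[eP eB]] | [partP BP]].
  by have [] := remove_fromK partQ iD; rewrite eP eB.
split; first exact: partition_add_to.
rewrite (add_toK partP iD BP) (pblock_add_to partP iD BP) setUC.
by rewrite setU1K ?(notin_block0 partP iD BP).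
Qed.

End Sums.

Lemma sum_partitions_with_block_setU1 (V : nmodType) (F : {set {set T}} -> V) D i A :
  i \notin D -> A \subset D -> A != set0 ->
  \sum_(P | partition P (D :\: A)) \sum_(B in set0 |: P) F (A |: add_to P i B) =
  \sum_(Q | partition Q (i |: D) && (A \in Q)) F Q.
Proof.
move=> iD AD A0; have iDA : i \notin D :\: A by rewrite inE (negbTE iD) andbF.
have iA : i \notin A by apply: contra iD; apply: subsetP.
rewrite -(sum_partitions_setU1 (fun Q => F (A |: Q)) iDA).
have -> : i |: (D :\: A) = (i |: D) :\: A.
  by apply/setP => x; rewrite !inE; case: eqVneq => [-> | _]; rewrite ?(negbTE iA).
by rewrite sum_partitions_with_block // (subset_trans AD) ?subsetU1.
Qed.
End PartitionBlocks.

Lemma sum_subsets_by_card (V : nmodType) (T : finType) (A : {set T}) (f : nat -> V) :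
  \sum_(B : {set T} | B \subset A) f #|B| = \sum_(k < #|A|.+1) f k *+ 'C(#|A|, k).
Proof.
rewrite (partition_big (fun B : {set T} => inord #|B| : 'I_#|A|.+1) xpredT) //=.
apply: eq_bigr => k _; rewrite -cards_draws -sumr_const.
have cardK (B : {set T}) : B \subset A -> (inord #|B| == k :> 'I_#|A|.+1) = (#|B| == k).
  by move=> BA; rewrite -val_eqE /= inordK // ltnS subset_leq_card.
apply: eq_big => [B | B /andP[BA]].
  by rewrite inE; case BA: (B \subset A); rewrite // cardK.
by rewrite cardK // => /eqP ->.
Qed.

Section ShapleyWeight.
Variable R : numFieldType.

Definition shapley_weight (n t : nat) : R := ((n - t)`! * t.-1`!)%:R / n`!%:R.

Lemma fact_neq0 n : n`!%:R != 0 :> R.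
Proof. by rewrite pnatr_eq0 -lt0n fact_gt0. Qed.

Lemma shapley_weightS m s : (s <= m)%N ->
  shapley_weight m s = m.+1%:R / (m.+1 - s)%:R * shapley_weight m.+1 s.
Proof.
move=> le_sm; rewrite /shapley_weight subSn // !factS !natrM.
by field; rewrite fact_neq0 !nat1r !pnatr_eq0.
Qed.

Lemma shapley_weight_binomial n t : (0 < t <= n)%N ->
  shapley_weight n t * t%:R *+ 'C(n, t) = 1.
Proof.
case: t => // t /andP[_ lt_tn].
rewrite /shapley_weight -mulr_natr -(bin_fact lt_tn) factS /= !natrM.
by field; rewrite !fact_neq0 nat1r !pnatr_eq0 /= -lt0n bin_gt0.
Qed.

Variable U : finType.
Implicit Types (N S : {set U}).

Lemma shapley_weight_setD1 N i S : i \in N -> S \subset N :\ i ->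
  shapley_weight #|N :\ i| #|S| =
  #|N|%:R / (#|N| - #|S|)%:R * shapley_weight #|N| #|S|.
Proof.
move=> iN SNi; rewrite (cardsD1 i N) iN add1n.
by rewrite shapley_weightS // subset_leq_card.
Qed.

Lemma sum_card_shapley_weight N :
  \sum_(S : {set U} | (S \subset N) && (S != set0)) shapley_weight #|N| #|S| * #|S|%:R =
  #|N|%:R.
Proof.
transitivity (\sum_(S : {set U} | S \subset N) shapley_weight #|N| #|S| * #|S|%:R).
  rewrite [RHS](bigD1 set0) ?sub0set //= cards0 mulr0 add0r.
  by apply: eq_bigl => S; rewrite andbC.
rewrite (sum_subsets_by_card N (fun k => shapley_weight #|N| k * k%:R)).
rewrite big_ord_recl mulr0 mul0rn add0r.
transitivity (\sum_(k < #|N|) (1 : R)); last by rewrite sumr_const card_ord.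
by apply: eq_bigr => k _; rewrite shapley_weight_binomial // lift0 ltn_ord.
Qed.

End ShapleyWeight.
Arguments shapley_weight {R}.

Section BlockProbability.
Variables (U : finType) (R : pzSemiRingType) (p : {set U} -> {set {set U}} -> R).
Implicit Types (N S T : {set U}) (v : {set U} -> R).

Definition block_prob N T : R :=
  \sum_(P : {set {set U}} | partition P N && (T \in P)) p N P.

Lemma expected_block_sum N v :
  \sum_(P : {set {set U}} | partition P N) p N P * (\sum_(B in P) v B) =
  \sum_(T : {set U} | (T \subset N) && (T != set0)) block_prob N T * v T.
Proof.
under eq_bigr do rewrite big_distrr.
rewrite (exchange_big_dep (fun T => (T \subset N) && (T != set0))) /=.
  by apply: eq_bigr => T _; rewrite /block_prob big_distrl.
by move=> P T partP TP; rewrite (partitionS partP TP) (partition_neq0 partP TP).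
Qed.

Lemma block_probE N S : S \subset N -> S != set0 ->
  block_prob N S = \sum_(P : {set {set U}} | partition P (N :\: S)) p N (S |: P).
Proof. by move=> SN S0; rewrite sum_partitions_with_block. Qed.

Lemma block_prob_add_toE N i S : i \in N -> S \subset N :\ i -> S != set0 ->
  block_prob N S = \sum_(P : {set {set U}} | partition P ((N :\ i) :\: S))
                     \sum_(B in set0 |: P) p N (S |: add_to P i B).
Proof. by move=> iN SNi S0; rewrite sum_partitions_with_block_setU1 ?setD1K ?setD11. Qed.

End BlockProbability.

Section RandomPartition.
Variables (U : finType) (R : realFieldType) (p : {set U} -> {set {set U}} -> R).
Implicit Types (N S T : {set U}) (v : {set U} -> R).

Lemma PotE N v : Pot N v =
  \sum_(T : {set U} | (T \subset N) && (T != set0)) shapley_weight #|N| #|T| * v T.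
Proof. by apply: eq_bigr => T _; rewrite /shapley_weight mulnC. Qed.

Lemma block_prob_of_Pot :
  (forall N v, TU_game v ->
     \sum_(P : {set {set U}} | partition P N) p N P * (\sum_(B in P) v B) = Pot N v) ->
  forall N T, T \subset N -> T != set0 -> block_prob p N T = shapley_weight #|N| #|T|.
Proof.
move=> genPot N T TN T0; have := genPot N (fun B => (B == T)%:R).
rewrite expected_block_sum PotE /TU_game eq_sym (negbTE T0) => /(_ erefl).
have TNT : (T \subset N) && (T != set0) by rewrite TN T0.
rewrite !(bigD1 T TNT) /= eqxx !mulr1 !big1 ?addr0 // => B /andP[_ /negbTE->];
  exact: mulr0.
Qed.

Section ShapleyBlockProb.
Hypothesis block_prob_shapley : forall N T, T \subset N -> T != set0 ->
  block_prob p N T = shapley_weight #|N| #|T|.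

Lemma Pot_of_block_prob N v :
  \sum_(P : {set {set U}} | partition P N) p N P * (\sum_(B in P) v B) = Pot N v.
Proof.
rewrite expected_block_sum PotE.
by apply: eq_bigr => T /andP[TN T0]; rewrite block_prob_shapley.
Qed.

Lemma block_prob_setD1_of_shapley N i S : i \in N -> S \subset N :\ i -> S != set0 ->
  block_prob p (N :\ i) S = #|N|%:R / (#|N| - #|S|)%:R * block_prob p N S.
Proof.
move=> iN SNi S0; rewrite !block_prob_shapley ?(subset_trans SNi (subD1set N i)) //.
exact: shapley_weight_setD1.
Qed.

End ShapleyBlockProb.

Hypothesis p_random : random_partition p.

Lemma sum_card_block_prob N :
  \sum_(T : {set U} | (T \subset N) && (T != set0)) block_prob p N T * #|T|%:R = #|N|%:R.
Proof.
rewrite -expected_block_sum.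
under eq_bigr => P partP do rewrite -natr_sum -(card_partition partP).
by rewrite -big_distrl /=; case: (p_random N) => _ _ ->; rewrite mul1r.
Qed.

Hypothesis block_prob_setD1 : forall N i S, i \in N -> S \subset N :\ i -> S != set0 ->
  block_prob p (N :\ i) S = #|N|%:R / (#|N| - #|S|)%:R * block_prob p N S.

Lemma block_prob_proper N i T : i \in N -> T \subset N :\ i -> T != set0 ->
  block_prob p (N :\ i) T = shapley_weight #|N :\ i| #|T| ->
  block_prob p N T = shapley_weight #|N| #|T|.
Proof.
move=> iN TNi T0; rewrite block_prob_setD1 // shapley_weight_setD1 //.
apply: mulfI; rewrite mulf_neq0 ?invr_eq0 // pnatr_eq0 -lt0n ?subn_gt0.
  by rewrite (cardsD1 i N) iN.
by rewrite (cardsD1 i N) iN add1n ltnS subset_leq_card.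
Qed.

Lemma block_prob_full N : N != set0 ->
  (forall T, T \subset N -> T != set0 -> T != N ->
     block_prob p N T = shapley_weight #|N| #|T|) ->
  block_prob p N N = shapley_weight #|N| #|N|.
Proof.
move=> N0 properE; have NN : (N \subset N) && (N != set0) by rewrite subxx N0.
have Nn0 : #|N|%:R != 0 :> R by rewrite pnatr_eq0 cards_eq0.
have := sum_card_block_prob N.
rewrite -(sum_card_shapley_weight R N) !(bigD1 N NN) /=.
under eq_bigr => T /andP[/andP[TN T0] TnN] do rewrite properE //.
by move/addIr/(mulIf Nn0).
Qed.

Lemma block_prob_eq_shapley_weight N T : T \subset N -> T != set0 ->
  block_prob p N T = shapley_weight #|N| #|T|.
Proof.
have [k] := ubnP #|N|; elim: k N T => // k IH N T /ltnSE leNk TN T0.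
have N0 : N != set0 by apply: contraNneq T0 => N0; rewrite -subset0 -N0.
have properE T' : T' \subset N -> T' != set0 -> T' != N ->
    block_prob p N T' = shapley_weight #|N| #|T'|.
  move=> T'N T'0 T'nN; have : N :\: T' != set0.
    by rewrite setD_eq0; apply: contra T'nN => NT'; rewrite eqEsubset T'N NT'.
  case/set0Pn => i /setDP[iN iT']; have T'Ni : T' \subset N :\ i by rewrite subsetD1 T'N.
  apply: (block_prob_proper iN T'Ni T'0); apply: IH => //.
  by rewrite (cardsD1 i N) iN in leNk.
by case: (eqVneq T N) => [-> | TnN]; [exact: block_prob_full | exact: properE].
Qed.

End RandomPartition.

Theorem proposition1 (U : finType) (R : realFieldType)
    (p : {set U} -> {set {set U}} -> R) :
  random_partition p ->
  [<->
   (* (i) *)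
   (forall (N : {set U}) (v : {set U} -> R), TU_game v ->
      \sum_(P : {set {set U}} | partition P N) p N P * (\sum_(B in P) v B)
        = Pot N v);
   (* (ii) *)
   (forall (N T : {set U}), T \subset N -> T != set0 ->
      \sum_(P : {set {set U}} | partition P N && (T \in P)) p N P
        = (((#|N| - #|T|)`! * (#|T|.-1)`!)%:R / (#|N|`!)%:R));
   (* (iii) *)
   (forall (N : {set U}) (i : U) (S : {set U}),
      i \in N -> S \subset N :\ i -> S != set0 ->
      \sum_(P : {set {set U}} | partition P ((N :\ i) :\: S)) p (N :\ i) (S |: P)
        = (#|N|%:R / (#|N| - #|S|)%:R) *
          \sum_(P : {set {set U}} | partition P ((N :\ i) :\: S))
             \sum_(B in set0 |: P) p N (S |: add_to P i B))].
Proof.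
move=> p_random; tfae=> [genPot | shapleyE | recE].
- exact: block_prob_of_Pot.
- move=> N i S iN SNi S0; rewrite -block_probE // -block_prob_add_toE //.
  exact: block_prob_setD1_of_shapley.
- move=> N v _; apply: Pot_of_block_prob; apply: block_prob_eq_shapley_weight => //.
  move=> N' i S iN SNi S0.
  by rewrite (block_probE p SNi S0) (block_prob_add_toE p iN SNi S0); apply: recE.
Qed.
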